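(* Let $(C,S)$ be a partially shaded tree, where $C$ is the support tree of a vertex of a non-degenerate transportation polytope $\mathrm{TP}(u,v)$. If some supply node satisfies (SIN) in $(C,S)$, then no demand node is incident in $C$ only to shaded $+$edges. In particular, every well-connected demand node is incident to a shaded $-$edge.
   Context: Let $N_1,N_2\ge1$, $u\in\mathbb{R}_{>0}^{N_1}$, $v\in\mathbb{R}_{>0}^{N_2}$ with $\sum_iu_i=\sum_jv_j$, and $\mathrm{TP}(u,v)=\{y\in\mathbb{R}^{N_1\times N_2}: \sum_j y_{ij}=u_i\ \forall i,\ \sum_i y_{ij}=v_j\ \forall j,\ y\ge 0\}$. View supply nodes $\sigma^1,\dots,\sigma^{N_1}$ and demand nodes $\delta^1,\dots,\delta^{N_2}$ as the two sides of $K_{N_1,N_2}$; the support graph of $y$ consists of the edges $\{\sigma^i,\delta^j\}$ with $y_{ij}>0$. $\mathrm{TP}(u,v)$ is non-degenerate if there are no nonempty proper subsets $I\subsetneq\{1,\dots,N_1\}$, $J\subsetneq\{1,\dots,N_2\}$ with $\sum_{i\in I}u_i=\sum_{j\in J}v_j$; then the support graph of each vertex is a spanning tree of $K_{N_1,N_2}$ determining the vertex; these are called trees. Fix a tree $F$ and a demand node $\delta^*$. Label the edges of $F$: each edge of $F$ lies on a path in $F$ starting at $\delta^*$, and edges along such paths are labeled alternately $+,-,+,\dots$ beginning with $+$ at $\delta^*$ (so each supply node is incident in $F$ to exactly one $+$edge, each demand node other than $\delta^*$ to exactly one $-$edge, and $\delta^*$ only to $+$edges). A partially shaded tree is a pair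 $(C,S)$ with $C$ a tree and $S\subseteq C\cap F$ the shaded edges (others unshaded); shaded edges carry their labels from $F$. A demand node is well-connected if it is not incident to an unshaded edge of $C$. For a supply node $\sigma$, every edge of $C$ lies on a unique path in $C$ starting at $\sigma$; number edges along such paths starting with $1$ at edges incident to $\sigma$, and call an edge odd (w.r.t. $\sigma$) if its number is odd. A supply node $\sigma$ satisfies (SIN) in $(C,S)$ if every edge of $C$ that is odd with respect to $\sigma$ is either unshaded or a shaded $-$edge incident to a well-connected demand node. *)

From HB Require Import structures.
From mathcomp Require Import all_boot all_order all_algebra.
Set Implicit Arguments. Unset Strict Implicit. Unset Printing Implicit Defensive.
Import Order.TTheory GRing.Theory Num.Theory.
Local Open Scope ring_scope.

Section TP.
Variables (R : realFieldType) (N1 N2 : nat).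

Definition tp_edge := ('I_N1 * 'I_N2)%type.
(* Nodes of K_{N1,N2}: inl i = supply tp_node sigma^i, inr j = demand tp_node delta^j. *)
Definition tp_node := ('I_N1 + 'I_N2)%type.

Definition in_TP (u : 'I_N1 -> R) (v : 'I_N2 -> R) (y : 'M[R]_(N1, N2)) : Prop :=
  (forall i, \sum_(j < N2) y i j = u i) /\
  (forall j, \sum_(i < N1) y i j = v j) /\
  (forall i j, 0 <= y i j).

Definition is_vertex u v (y : 'M[R]_(N1, N2)) : Prop :=
  in_TP u v y /\
  forall y1 y2 (t : R), in_TP u v y1 -> in_TP u v y2 -> 0 < t -> t < 1 ->
    y = t *: y1 + (1 - t) *: y2 -> y1 = y2.

Definition tp_nondegenerate (u : 'I_N1 -> R) (v : 'I_N2 -> R) : Prop :=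
  forall (I : {set 'I_N1}) (J : {set 'I_N2}),
    I != set0 -> I != setT -> J != set0 -> J != setT ->
    \sum_(i in I) u i != \sum_(j in J) v j.

Definition tp_support (y : 'M[R]_(N1, N2)) : {set tp_edge} :=
  [set e : tp_edge | 0 < y e.1 e.2].

Definition is_tree u v (C : {set tp_edge}) : Prop :=
  exists y, is_vertex u v y /\ C = tp_support y.

End TP.

Section Graph.
Variables (N1 N2 : nat).

Definition tp_adj (E : {set tp_edge N1 N2}) : rel (tp_node N1 N2) :=
  fun a b => match a, b with
  | inl i, inr j => (i, j) \in E
  | inr j, inl i => (i, j) \in E
  | _, _ => false
  end.

Definition tp_joins (e : tp_edge N1 N2) (x y : tp_node N1 N2) : bool :=
  ((x == inl e.1) && (y == inr e.2)) || ((x == inr e.2) && (y == inl e.1)).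

(* edge_number E r e k : in the graph E there is a (simple) path
   r = x_0, x_1, ..., x_k starting at r whose last (k-th) tp_edge is e;
   i.e. e gets number k when edges along paths from r are numbered 1,2,... *)
Definition edge_number (E : {set tp_edge N1 N2}) (r : tp_node N1 N2)
    (e : tp_edge N1 N2) (k : nat) : Prop :=
  exists (p : seq (tp_node N1 N2)) (y : tp_node N1 N2),
    [/\ path (tp_adj E) r (rcons p y), uniq (r :: rcons p y),
        tp_joins e (last r p) y & k = (size p).+1].

Definition plus_edge (F : {set tp_edge N1 N2}) (dstar : 'I_N2) (e : tp_edge N1 N2) :=
  exists k, odd k /\ edge_number F (inr dstar) e k.
Definition minus_edge (F : {set tp_edge N1 N2}) (dstar : 'I_N2) (e : tp_edge N1 N2) :=
  exists k, ~~ odd k /\ edge_number F (inr dstar) e k.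

Definition well_connected (C S : {set tp_edge N1 N2}) (d : 'I_N2) : Prop :=
  forall i, (i, d) \in C -> (i, d) \in S.

Definition odd_wrt (C : {set tp_edge N1 N2}) (s : 'I_N1) (e : tp_edge N1 N2) : Prop :=
  exists k, odd k /\ edge_number C (inl s) e k.

Definition SIN (F : {set tp_edge N1 N2}) (dstar : 'I_N2) (C S : {set tp_edge N1 N2})
    (s : 'I_N1) : Prop :=
  forall e, e \in C -> odd_wrt C s e ->
    e \notin S \/
    [/\ e \in S, minus_edge F dstar e & well_connected C S e.2].

End Graph.

From HB Require Import structures.
From mathcomp Require Import all_boot all_order all_algebra.
From mathcomp Require Import ring lra.
Import Order.TTheory GRing.Theory Num.Theory.
Local Open Scope ring_scope.
Set Implicit Arguments. Unset Strict Implicit.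

(* Nondegeneracy makes the support of every feasible point connected: the
   supply and demand nodes of a component would have equal total mass.  So
   every demand node d is reached from the (SIN) supply node s by a simple path
   of the tree C, whose last edge is odd w.r.t. s; by (SIN) that edge is
   unshaded or a shaded -edge.  No edge of F carries both labels: two paths
   from the root reaching an edge from opposite ends yield a nonzero balanced
   matrix supported in the support of the vertex F, contradicting
   extremality. *)

Section BalancedPerturbation.
Variables (R : realFieldType) (N1 N2 : nat).
Implicit Types (u : 'I_N1 -> R) (v : 'I_N2 -> R) (y z : 'M[R]_(N1, N2)).

Definition balanced z :=
  (forall i, \sum_j z i j = 0) /\ (forall j, \sum_i z i j = 0).

Lemma balancedZ c z : balanced z -> balanced (c *: z).
Proof.
case=> zr zc; split=> [i|j]; under eq_bigr do rewrite mxE.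
  by rewrite -mulr_sumr zr mulr0.
by rewrite -mulr_sumr zc mulr0.
Qed.

Lemma in_TP_add_balanced u v y z :
  in_TP u v y -> balanced z -> (forall i j, 0 <= y i j + z i j) ->
  in_TP u v (y + z).
Proof.
move=> [yr [yc _]] [zr zc] yz_ge0; split; [|split] => [i|j|i j]; last by rewrite mxE.
  by under eq_bigr do rewrite mxE; rewrite big_split /= yr zr addr0.
by under eq_bigr do rewrite mxE; rewrite big_split /= yc zc addr0.
Qed.

Lemma exists_scale_le (T : finType) (a b : T -> R) :
  (forall x, 0 <= b x) -> (forall x, a x != 0 -> 0 < b x) ->
  exists2 eps, 0 < eps & forall x, eps * `|a x| <= b x.
Proof.
move=> b_ge0 b_gt0.
pose M := \sum_(x | a x != 0) `|a x| / b x.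
have M_ge0 : 0 <= M by apply: sumr_ge0 => x /b_gt0 bx; rewrite divr_ge0 // ltW.
exists (1 + M)^-1 => [|x]; first by rewrite invr_gt0; lra.
have [->|ax] := eqVneq (a x) 0; first by rewrite normr0 mulr0.
have bx := b_gt0 x ax.
have ax_le : `|a x| / b x <= M.
  rewrite /M (bigD1 x) //= lerDl; apply: sumr_ge0 => w /andP[/b_gt0 bw _].
  by rewrite divr_ge0 // ltW.
rewrite ler_pdivrMr // in ax_le.
rewrite mulrC ler_pdivrMr; last lra.
nra.
Qed.

(* A vertex [y] is the midpoint of [y + eps z] and [y - eps z], both feasible
   for small [eps] when [z] is balanced and supported in the support of [y]. *)
Lemma vertex_balanced_eq0 u v y z :
  is_vertex u v y -> balanced z -> (forall i j, z i j != 0 -> 0 < y i j) ->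
  z = 0.
Proof.
move=> [yTP y_extreme] zbal zsupp.
have [eps eps_gt0 eps_le] := @exists_scale_le ('I_N1 * 'I_N2)%type
  (fun e => z e.1 e.2) (fun e => y e.1 e.2)
  (fun e => yTP.2.2 e.1 e.2) (fun e => zsupp e.1 e.2).
have feasible c : `|c| <= eps -> in_TP u v (y + c *: z).
  move=> c_le; apply: in_TP_add_balanced => // [|i j]; first exact: balancedZ.
  have cz_le : `|c * z i j| <= y i j.
    rewrite normrM; apply: le_trans (eps_le (i, j)).
    by rewrite ler_wpM2r.
  by rewrite mxE; have := lerNnormlW cz_le; lra.
have eps_norm : `|eps| <= eps by rewrite gtr0_norm.
have eps_normN : `|- eps| <= eps by rewrite normrN gtr0_norm.
have mid : y = 2^-1 *: (y + eps *: z) + (1 - 2^-1) *: (y + (- eps) *: z).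
  by apply/matrixP => i j; rewrite !mxE; field.
have eq_pm : y + eps *: z = y + (- eps) *: z.
  apply: (y_extreme _ _ 2^-1 (feasible _ eps_norm) (feasible _ eps_normN)) => //;
  by lra.
apply/matrixP => i j; have := congr1 (fun w : 'M_(N1, N2) => w i j) eq_pm.
rewrite !mxE => h; have : eps * z i j = 0 by lra.
by move/eqP; rewrite mulf_eq0 (gt_eqF eps_gt0) => /eqP.
Qed.

End BalancedPerturbation.

Section Walks.
Variables (R : realFieldType) (N1 N2 : nat).
Local Notation node := (tp_node N1 N2).
Implicit Types (E : {set tp_edge N1 N2}) (a b x : node) (s : seq node).

Definition is_supply a : bool := if a is inl _ then true else false.

Lemma tp_adj_is_supply E a b : tp_adj E a b -> is_supply b = ~~ is_supply a.
Proof. by case: a => a; case: b. Qed.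

Lemma is_supply_last E a s :
  path (tp_adj E) a s -> is_supply (last a s) = is_supply a (+) odd (size s).
Proof.
elim: s a => [|b s IHs] a /=; first by rewrite addbF.
case/andP => ab bs; rewrite IHs // (tp_adj_is_supply ab).
by case: (is_supply a); case: (odd (size s)).
Qed.

Lemma tp_adj_joins E e a b : tp_adj E a b -> tp_joins e a b -> e \in E.
Proof.
case: e => i j; case: a => a; case: b => b //=.
  by move=> ab /orP[/andP[/eqP[<-] /eqP[<-]]|/andP[]].
by move=> ab /orP[/andP[]|/andP[/eqP[<-] /eqP[<-]]].
Qed.

Lemma tp_joins_endpoint e a b : tp_joins e a b -> (b == inl e.1) || (b == inr e.2).
Proof. by case/orP => /andP[_ ->]; rewrite ?orbT. Qed.

Lemma tp_joins_endpoints e a b x :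
  tp_joins e a b -> (x == inl e.1) || (x == inr e.2) -> (x == a) || (x == b).
Proof. by case/orP => /andP[/eqP-> /eqP->]; rewrite // orbC. Qed.

Lemma tp_joins_flip e a b a' b' :
  tp_joins e a b -> tp_joins e a' b' -> b != b' -> a = b'.
Proof.
by case/orP => /andP[/eqP-> /eqP->]; case/orP => /andP[_ /eqP->]; rewrite ?eqxx.
Qed.

Definition arc_mx a b : 'M[R]_(N1, N2) :=
  match a, b with
  | inl i, inr j => delta_mx i j
  | inr j, inl i => - delta_mx i j
  | _, _ => 0
  end.

Fixpoint walk_mx a s : 'M[R]_(N1, N2) :=
  if s is b :: s' then arc_mx a b + walk_mx b s' else 0.

Lemma walk_mx_rcons a s b : walk_mx a (rcons s b) = walk_mx a s + arc_mx (last a s) b.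
Proof. by elim: s a => [|c s IHs] a /=; rewrite ?addr0 ?add0r ?IHs ?addrA. Qed.

Lemma arc_mx_eq0 a b i j : ~~ tp_joins (i, j) a b -> arc_mx a b i j = 0.
Proof.
apply: contraNeq; case: a => a; case: b => b; rewrite /tp_joins /= ?mxE ?eqxx //.
  by case: (i =P a) => [->|_]; case: (j =P b) => [->|_];
    rewrite ?eqxx //= ?mulr0n ?eqxx.
by case: (i =P b) => [->|_]; case: (j =P a) => [->|_];
  rewrite ?eqxx //= ?mulr0n ?oppr0 ?eqxx.
Qed.

Lemma arc_mx_neq0 a b i j : tp_joins (i, j) a b -> arc_mx a b i j != 0.
Proof.
by case/orP => /andP[/eqP-> /eqP->]; rewrite /= !mxE ?oppr_eq0 !eqxx ?oner_eq0.
Qed.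

Lemma walk_mx_eq0 a s x i j :
  (x == inl i) || (x == inr j) -> x \notin a :: s -> walk_mx a s i j = 0.
Proof.
move=> x_end; elim: s a => [|b s IHs] a; first by rewrite mxE.
rewrite in_cons negb_or => /andP[xa xbs]; rewrite mxE IHs // addr0.
apply/arc_mx_eq0/negP => ab; move: (tp_joins_endpoints ab x_end).
by rewrite (negbTE xa) => /eqP xb; rewrite xb in_cons eqxx in xbs.
Qed.

Lemma walk_mx_support E a s i j :
  path (tp_adj E) a s -> walk_mx a s i j != 0 -> (i, j) \in E.
Proof.
elim: s a => [|b s IHs] a /=; first by rewrite mxE eqxx.
case/andP => ab bs; rewrite mxE.
have [abj|/arc_mx_eq0->] := boolP (tp_joins (i, j) a b).
  by rewrite (tp_adj_joins ab abj).
by rewrite add0r; apply: IHs.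
Qed.

Lemma delta_mx_row_sum i0 j0 i :
  \sum_j (delta_mx i0 j0 : 'M[R]_(N1, N2)) i j = (i == i0)%:R.
Proof.
under eq_bigr do rewrite mxE.
by rewrite (bigD1 j0) //= eqxx andbT big1 ?addr0 // => j /negbTE->; rewrite andbF.
Qed.

Lemma delta_mx_col_sum i0 j0 j :
  \sum_i (delta_mx i0 j0 : 'M[R]_(N1, N2)) i j = (j == j0)%:R.
Proof.
under eq_bigr do rewrite mxE.
by rewrite (bigD1 i0) //= eqxx big1 ?addr0 // => i /negbTE->.
Qed.

Lemma arc_mx_row_sum E a b i : tp_adj E a b ->
  \sum_j arc_mx a b i j = (a == inl i)%:R - (b == inl i)%:R.
Proof.
case: a => a; case: b => b //= _; first by rewrite delta_mx_row_sum subr0 eq_sym.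
by under eq_bigr do rewrite mxE; rewrite sumrN delta_mx_row_sum sub0r eq_sym.
Qed.

Lemma arc_mx_col_sum E a b j : tp_adj E a b ->
  \sum_i arc_mx a b i j = (b == inr j)%:R - (a == inr j)%:R.
Proof.
case: a => a; case: b => b //= _; first by rewrite delta_mx_col_sum subr0 eq_sym.
by under eq_bigr do rewrite mxE; rewrite sumrN delta_mx_col_sum sub0r eq_sym.
Qed.

Lemma walk_mx_row_sum E a s i : path (tp_adj E) a s ->
  \sum_j walk_mx a s i j = (a == inl i)%:R - (last a s == inl i)%:R.
Proof.
elim: s a => [|b s IHs] a /=.
  by under eq_bigr do rewrite mxE; rewrite big1 ?subrr.
case/andP => ab bs; under eq_bigr do rewrite mxE.
by rewrite big_split /= (arc_mx_row_sum _ ab) IHs // addrA subrK.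
Qed.

Lemma walk_mx_col_sum E a s j : path (tp_adj E) a s ->
  \sum_i walk_mx a s i j = (last a s == inr j)%:R - (a == inr j)%:R.
Proof.
elim: s a => [|b s IHs] a /=.
  by under eq_bigr do rewrite mxE; rewrite big1 ?subrr.
case/andP => ab bs; under eq_bigr do rewrite mxE.
by rewrite big_split /= (arc_mx_col_sum _ ab) IHs // addrC addrA subrK.
Qed.

Lemma balanced_walk_mxB E a p q :
  path (tp_adj E) a p -> path (tp_adj E) a q -> last a p = last a q ->
  balanced (walk_mx a p - walk_mx a q).
Proof.
move=> ap aq pq; split=> [i|j]; under eq_bigr do rewrite !mxE; rewrite sumrB.
  by rewrite (walk_mx_row_sum _ ap) (walk_mx_row_sum _ aq) pq subrr.
by rewrite (walk_mx_col_sum _ ap) (walk_mx_col_sum _ aq) pq subrr.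
Qed.

End Walks.

Section Trees.
Variables (R : realFieldType) (N1 N2 : nat).
Implicit Types (u : 'I_N1 -> R) (v : 'I_N2 -> R) (y : 'M[R]_(N1, N2)).

(* Two numberings of [e] of different parity reach [e] from opposite ends, so
   the two paths close up into a cycle through [e] inside the support. *)
Lemma edge_number_odd_eq u v F r e k k' :
  is_tree u v F -> edge_number F r e k -> edge_number F r e k' -> odd k = odd k'.
Proof.
move=> [y [y_vertex ->]] [p [b [rp rpu peb ->]]] [q [b' [rq rqu qeb' ->]]].
have par_b := is_supply_last rp; have par_b' := is_supply_last rq.
rewrite last_rcons size_rcons in par_b; rewrite last_rcons size_rcons in par_b'.
have [eq_bb'|neq_bb'] := eqVneq b b'.
  by apply: (@addbI (is_supply r)); rewrite -par_b -par_b' eq_bb'.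
exfalso.
move: (rp) (rq); rewrite !rcons_path => /andP[rp' _] /andP[rq' _].
have last_q : last r q = b by apply: tp_joins_flip qeb' peb _; rewrite eq_sym.
pose z := walk_mx R r (rcons p b) - walk_mx R r q.
have z_bal : balanced z by apply: balanced_walk_mxB rp rq' _; rewrite last_rcons.
have z_supp i j : z i j != 0 -> 0 < y i j.
  move=> zij; suff : (i, j) \in tp_support y by rewrite inE.
  move: zij; rewrite /z !mxE.
  have [q0|/(walk_mx_support rq') //] := eqVneq (walk_mx R r q i j) 0.
  by rewrite q0 subr0 => /(walk_mx_support rp).
move: rpu rqu; rewrite -!rcons_cons !rcons_uniq => /andP[b_notin _] /andP[b'_notin _].
have := vertex_balanced_eq0 y_vertex z_bal z_supp.
move/matrixP/(_ e.1 e.2)/eqP; rewrite /z !mxE walk_mx_rcons mxE.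
rewrite (walk_mx_eq0 _ (tp_joins_endpoint peb) b_notin).
rewrite (walk_mx_eq0 _ (tp_joins_endpoint qeb') b'_notin) subr0 add0r.
by apply/negP; apply: arc_mx_neq0; rewrite -surjective_pairing.
Qed.

Lemma plus_minus_edgeF u v F dstar e :
  is_tree u v F -> plus_edge F dstar e -> minus_edge F dstar e -> False.
Proof.
move=> tree_F [k [k_odd ke]] [k' [k'_even k'e]].
by move: k'_even; rewrite -(edge_number_odd_eq tree_F ke k'e) k_odd.
Qed.

Lemma in_TP_component_sum u v y (I : {set 'I_N1}) (J : {set 'I_N2}) :
  in_TP u v y -> (forall i j, 0 < y i j -> (i \in I) = (j \in J)) ->
  \sum_(i in I) u i = \sum_(j in J) v j.
Proof.
move=> [yr [yc y_ge0]] closed.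
have y0 i j : (i \in I) != (j \in J) -> y i j = 0.
  move=> ij; apply/eqP; rewrite eq_le y_ge0 andbT leNgt.
  by apply: contra ij => /closed ->.
transitivity (\sum_(i in I) \sum_(j in J) y i j).
  apply: eq_bigr => i iI; rewrite -yr (bigID (mem J)) /= [X in _ + X]big1 ?addr0 //.
  by move=> j jJ; apply: y0; rewrite iI.
rewrite exchange_big; apply: eq_bigr => j jJ.
rewrite -yc [RHS](bigID (mem I)) /= [X in _ = _ + X]big1 ?addr0 // => i iI.
by apply: y0; rewrite jJ (negbTE iI).
Qed.

Lemma psumr_set_gt0 (T : finType) (f : T -> R) (A : {set T}) :
  (forall x, 0 < f x) -> A != set0 -> 0 < \sum_(x in A) f x.
Proof.
move=> f_gt0 /set0Pn[x xA]; rewrite (bigD1 x) //= ltr_wpDr //.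
by apply: sumr_ge0 => w _; apply: ltW.
Qed.

Lemma psumr_set_ltT (T : finType) (f : T -> R) (A : {set T}) :
  (forall x, 0 < f x) -> A != setT -> \sum_(x in A) f x < \sum_x f x.
Proof.
move=> f_gt0 AT; rewrite [X in _ < X](bigID (mem A)) /= ltrDl.
have -> : \sum_(x | x \notin A) f x = \sum_(x in ~: A) f x.
  by apply: eq_bigl => x; rewrite inE.
apply: psumr_set_gt0 => //; apply: contra AT => /eqP AC0.
by rewrite -[A]setCK AC0 setC0.
Qed.

Lemma support_connect u v y s d :
  (forall i, 0 < u i) -> (forall j, 0 < v j) -> tp_nondegenerate u v ->
  in_TP u v y -> connect (tp_adj (tp_support y)) (inl s) (inr d).
Proof.
move=> u_gt0 v_gt0 nondeg yTP.
pose reach := connect (tp_adj (tp_support y)) (inl s).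
pose I := [set i | reach (inl i)]; pose J := [set j | reach (inr j)].
have closed i j : 0 < y i j -> (i \in I) = (j \in J).
  move=> yij; rewrite !inE; apply/idP/idP => h; apply: connect_trans h (connect1 _).
    by rewrite /= inE.
  by rewrite /= inE.
have sumIJ := in_TP_component_sum yTP closed.
have sum_uv : \sum_i u i = \sum_j v j.
  have := @in_TP_component_sum u v y setT setT yTP.
  by rewrite !(eq_bigl _ _ (@in_setT _)); apply=> i j _; rewrite !inE.
apply: contraT => not_reach.
have JT : J != setT by apply/eqP => /setP/(_ d); rewrite !inE; exact/negP.
have I0 : I != set0 by apply/set0Pn; exists s; rewrite inE /reach connect0.
have J0 : J != set0.
  apply: contraTneq (psumr_set_gt0 u_gt0 I0) => J0.
  by rewrite sumIJ J0 big_set0 ltxx.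
have IT : I != setT.
  apply: contraTneq (psumr_set_ltT v_gt0 JT) => IT.
  by rewrite -sumIJ IT (eq_bigl _ _ (@in_setT _)) sum_uv ltxx.
by have := nondeg _ _ I0 IT J0 JT; rewrite sumIJ eqxx.
Qed.

Lemma connect_odd_edge (C : {set tp_edge N1 N2}) s d :
  connect (tp_adj C) (inl s) (inr d) -> exists2 i, (i, d) \in C & odd_wrt C s (i, d).
Proof.
case/connectP => p sp; case/shortenP: sp => p' sp' p'_uniq _ {p}.
case/lastP: p' sp' p'_uniq => [//|q b]; rewrite last_rcons.
move=> sqb sqb_uniq eq_db; subst b.
move: (sqb); rewrite rcons_path => /andP[_].
case last_q: (last (inl s) q) => [i|//] qd; exists i => //.
exists (size q).+1; split.
  by have := is_supply_last sqb; rewrite last_rcons size_rcons /=; case: odd.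
by exists q, (inr d); split; rewrite // /tp_joins last_q !eqxx.
Qed.

End Trees.

Unset Implicit Arguments.

Theorem lemma3 (R : realFieldType) (N1 N2 : nat)
  (u : 'I_N1 -> R) (v : 'I_N2 -> R)
  (hN1 : (1 <= N1)%N) (hN2 : (1 <= N2)%N)
  (hu : forall i, 0 < u i) (hv : forall j, 0 < v j)
  (hsum : \sum_(i < N1) u i = \sum_(j < N2) v j)
  (hnd : tp_nondegenerate u v)
  (F : {set tp_edge N1 N2}) (hF : is_tree u v F) (dstar : 'I_N2)
  (C S : {set tp_edge N1 N2}) (hC : is_tree u v C) (hS : S \subset C :&: F) :
  (exists s : 'I_N1, SIN F dstar C S s) ->
  ~ (exists d : 'I_N2, forall i : 'I_N1,
        (i, d) \in C -> (i, d) \in S /\ plus_edge F dstar (i, d)) /\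
  (forall d : 'I_N2, well_connected C S d ->
     exists i : 'I_N1, (i, d) \in S /\ minus_edge F dstar (i, d)).
Proof.
move=> [s s_SIN].
have odd_edge d : exists2 i, (i, d) \in C & odd_wrt C s (i, d).
  have [y [[yTP _] ->]] := hC.
  exact/connect_odd_edge/(support_connect s d hu hv hnd yTP).
split.
- case=> d only_plus; have [i iC i_odd] := odd_edge d.
  have [iS i_plus] := only_plus i iC.
  case: (s_SIN _ iC i_odd) => [|[_ i_minus _]]; first by rewrite iS.
  exact: plus_minus_edgeF hF i_plus i_minus.
- move=> d d_wc; have [i iC i_odd] := odd_edge d; exists i.
  by case: (s_SIN _ iC i_odd) => [|[iS i_minus _] //]; rewrite (d_wc i iC).
Qed.
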